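(* Let $N$ be a society, $\nabla$ an ES basic fusion operator satisfying (ESF-SD), (ESF-P) and (ESF-I), and $D$ an $N$-coalition. If there exist interpretations $w\ne w'$ and $E_{w,w'},E_{w'}\in\mathcal E$ with $[\![B(E_{w,w'})]\!]=\{w,w'\}$, $[\![B(E_{w'})]\!]=\{w'\}$ such that $D$ is locally decisive for $E_{w,w'}$ against $E_{w'}$, then $D$ is a decisive $N$-coalition (i.e. decisive for $E$ against $E'$ for all $E,E'\in\mathcal E$).
   Context: Setting: epistemic space $(\mathcal E,B,\mathcal L_{\mathcal P})$ ($\mathcal E$ nonempty, $B:\mathcal E\to$ propositional formulas over finite $\mathcal P$, $|\mathcal P|\ge2$, image modulo equivalence exactly the consistent formulas; $[\![\phi]\!]$ models; $\varphi_M$ a formula with models exactly $M$); agents: well-ordered set $\mathcal S$; society: nonempty finite $N\subseteq\mathcal S$; $N$-profile $\Phi:N\to\mathcal E$, $E_i=\Phi(i)$, identified with $E_i$ if $N=\{i\}$; profiles on $\{i_1<\dots<i_n\}$, $\{j_1<\dots<j_m\}$ equivalent if $n=m$ and entries coincide position-wise. ES basic fusion operator: a map $\nabla(\Phi,E)\in\mathcal E$ with (ESF1) $B(\nabla(\Phi,E))\vdash B(E)$; (ESF2) equivalent profiles and $B(E)\equiv B(E')$ give equivalent $B(\nabla)$; (ESF3) if $B(E)\equiv B(E')\wedge B(E'')$ then $B(\nabla(\Phi,E'))\wedge B(E'')\vdash B(\nabla(\Phi,E))$; (ESF4) if moreover $B(\nabla(\Phi,E'))\wedge B(E'')\nvdash\bot$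 then $B(\nabla(\Phi,E))\vdash B(\nabla(\Phi,E'))\wedge B(E'')$. (ESF-SD): for every agent $i$, interpretations $w_1,w_2,w_3$ and $E_{w_1,w_2},E_{w_2,w_3}$ with $[\![B(E_{w_1,w_2})]\!]=\{w_1,w_2\}$, $[\![B(E_{w_2,w_3})]\!]=\{w_2,w_3\}$, there exist $i$-profiles realising each of: (i) $B(\nabla(E_i,E_{w_1,w_2}))\equiv\varphi_{w_1,w_2}$ and $B(\nabla(E_i,E_{w_2,w_3}))\equiv\varphi_{w_2,w_3}$; (ii) $\equiv\varphi_{w_1,w_2}$ and $\equiv\varphi_{w_2}$; (iii) $\equiv\varphi_{w_1}$ and $\equiv\varphi_{w_2,w_3}$; (iv) $\equiv\varphi_{w_1}$ and $\equiv\varphi_{w_2}$. (ESF-P): for every $N$, $N$-profile $\Phi$, $E,E'$: if $\bigwedge_{i\in N}B(\nabla(E_i,E))\nvdash\bot$ and $B(\nabla(E_i,E))\wedge B(E')\vdash\bot$ for all $i\in N$ then $B(\nabla(\Phi,E))\wedge B(E')\vdash\bot$. (ESF-I): for every $N$, $N$-profiles $\Phi,\Phi'$, $E$: if for every $E'$ with $B(E')\vdash B(E)$, $B(\nabla(E_j,E'))\equiv B(\nabla(E'_j,E'))$ for all $j\in N$, then $B(\nabla(\Phi,E))\equiv B(\nabla(\Phi',E))$. An $N$-coalition is a subset $D\subseteq N$. $D$ is locally decisive for $E$ against $E'$ if for every $N$-profile $\Phi$ with (i) $B(\nabla(E_i,E))\wedge B(E')\vdash\bot$ for all $i\in D$,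 (ii) $B(\nabla(E_j,E))\equiv B(E')$ for all $j\in N\setminus D$, (iii) $\bigwedge_{i\in D}B(\nabla(E_i,E))\nvdash\bot$, we have $B(\nabla(\Phi,E))\wedge B(E')\vdash\bot$. $D$ is decisive for $E$ against $E'$ if the same conclusion holds for every $N$-profile satisfying only (i) and (iii). *)

From Stdlib Require Import Sorted.
From HB Require Import structures.
From mathcomp Require Import all_boot.

Set Implicit Arguments.
Unset Strict Implicit.
Unset Printing Implicit Defensive.

Section Logic.
Variable P : finType.

Inductive form : Type :=
  | FVar of P
  | FTop
  | FBot
  | FNeg of form
  | FAnd of form & form
  | FOr of form & form
  | FImp of form & form.

Definition interp := {ffun P -> bool}.

Fixpoint eval (w : interp) (f : form) : bool :=
  match f with
  | FVar p => w p
  | FTop => true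
  | FBot => false
  | FNeg g => ~~ eval w g
  | FAnd g h => eval w g && eval w h
  | FOr g h => eval w g || eval w h
  | FImp g h => eval w g ==> eval w h
  end.

Definition models (f : form) : {set interp} := [set w | eval w f].

(* f |- g  (semantic consequence, = classical derivability) *)
Definition entails (f g : form) : bool := models f \subset models g.
Definition fequiv (f g : form) : Prop := models f = models g.
Definition consistent (f : form) : bool := ~~ entails f FBot.
Definition bigAnd (s : seq form) : form := foldr FAnd FTop s.
End Logic.

Definition epistemic_space (P : finType) (E : Type) (B : E -> form P) : Prop :=
  [/\ inhabited E,
      (forall e : E, consistent (B e)) &
      (forall phi : form P, consistent phi -> exists e : E, fequiv (B e) phi)].

Definition well_order (S : Type) (lt : S -> S -> Prop) : Prop :=
  [/\ well_founded lt,
      (forall x y z, lt x y -> lt y z -> lt x z) &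
      (forall x y, lt x y \/ x = y \/ lt y x)].

(* A society: a nonempty finite set of agents, represented canonically as
   its strictly increasing enumeration i_1 < ... < i_n. *)
Record society (S : Type) (lt : S -> S -> Prop) := Society {
  agents : seq S;
  agents_sorted : Sorted lt agents;
  agents_nonempty : agents <> [::] }.

Lemma cons_neq_nil (T : Type) (x : T) (l : seq T) : x :: l <> [::].
Proof. by []. Qed.

Definition single_soc (S : Type) (lt : S -> S -> Prop) (i : S) : society lt :=
  @Society S lt [:: i] (Sorted_cons (Sorted_nil lt) (HdRel_nil lt i))
           (@cons_neq_nil S i [::]).

(* An N-profile Phi : N -> E, where the agent at position k (in increasing
   order) of N is [agent_at k] and its epistemic state is [Phi k]. *)
Definition profile (S : Type) (lt : S -> S -> Prop) (E : Type)
  (N : society lt) : Type := 'I_(size (agents N)) -> E.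

Definition agent_at (S : Type) (lt : S -> S -> Prop) (N : society lt)
  (k : 'I_(size (agents N))) : S := tnth (in_tuple (agents N)) k.

(* A fusion operator maps an N-profile (for any society N) and an
   epistemic state (the integrity constraint) to an epistemic state. *)
Definition fusion_op (S : Type) (lt : S -> S -> Prop) (E : Type) : Type :=
  forall N : society lt, profile E N -> E -> E.

Definition nabla1 (S : Type) (lt : S -> S -> Prop) (E : Type)
  (nab : fusion_op lt E) (i : S) (Ei : E) (e : E) : E :=
  nab (single_soc lt i) (fun _ => Ei) e.

Section Postulates.
Variables (P : finType) (E : Type) (B : E -> form P).
Variables (S : Type) (lt : S -> S -> Prop).
Variable nab : fusion_op lt E.

Definition nab_at (N : society lt) (Phi : profile E N)
  (k : 'I_(size (agents N))) (e : E) : E :=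
  nabla1 nab (agent_at k) (Phi k) e.

Definition ES_basic_fusion : Prop :=
  [/\
      (forall (N : society lt) (Phi : profile E N) (e : E),
         entails (B (nab Phi e)) (B e)),
      (forall (N N' : society lt) (Phi : profile E N) (Phi' : profile E N')
              (e e' : E),
         size (agents N) = size (agents N') ->
         (forall (k : nat) (hk : k < size (agents N))
                 (hk' : k < size (agents N')),
            Phi (Ordinal hk) = Phi' (Ordinal hk')) ->
         fequiv (B e) (B e') ->
         fequiv (B (nab Phi e)) (B (nab Phi' e'))),
      (forall (N : society lt) (Phi : profile E N) (e e' e'' : E),
         fequiv (B e) (FAnd (B e') (B e'')) ->
         entails (FAnd (B (nab Phi e')) (B e'')) (B (nab Phi e))) &
      (forall (N : society lt) (Phi : profile E N) (e e' e'' : E),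
         fequiv (B e) (FAnd (B e') (B e'')) ->
         consistent (FAnd (B (nab Phi e')) (B e'')) ->
         entails (B (nab Phi e)) (FAnd (B (nab Phi e')) (B e'')))].

(* (ESF-SD).  [models (B x) = M] is B(x) == phi_M. *)
Definition ESF_SD : Prop :=
  forall (i : S) (w1 w2 w3 : interp P) (e12 e23 : E),
    w1 != w2 -> w2 != w3 -> w1 != w3 ->
    models (B e12) = [set w1; w2] ->
    models (B e23) = [set w2; w3] ->
    [/\ (exists Ei : E,
           models (B (nabla1 nab i Ei e12)) = [set w1; w2] /\
           models (B (nabla1 nab i Ei e23)) = [set w2; w3]),
        (exists Ei : E,
           models (B (nabla1 nab i Ei e12)) = [set w1; w2] /\
           models (B (nabla1 nab i Ei e23)) = [set w2]),
        (exists Ei : E,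
           models (B (nabla1 nab i Ei e12)) = [set w1] /\
           models (B (nabla1 nab i Ei e23)) = [set w2; w3]) &
        (exists Ei : E,
           models (B (nabla1 nab i Ei e12)) = [set w1] /\
           models (B (nabla1 nab i Ei e23)) = [set w2])].

Definition ESF_P : Prop :=
  forall (N : society lt) (Phi : profile E N) (e e' : E),
    consistent (bigAnd [seq B (nab_at Phi k e) | k <- enum 'I_(size (agents N))]) ->
    (forall k : 'I_(size (agents N)),
       entails (FAnd (B (nab_at Phi k e)) (B e')) (FBot P)) ->
    entails (FAnd (B (nab Phi e)) (B e')) (FBot P).

Definition ESF_I : Prop :=
  forall (N : society lt) (Phi Phi' : profile E N) (e : E),
    (forall e' : E, entails (B e') (B e) ->
       forall k : 'I_(size (agents N)),
         fequiv (B (nab_at Phi k e')) (B (nab_at Phi' k e'))) ->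
    fequiv (B (nab Phi e)) (B (nab Phi' e)).

(* An N-coalition D (a subset of N, given by the positions of its members)
   is locally decisive for e against e'. *)
Definition locally_decisive (N : society lt) (D : {set 'I_(size (agents N))})
  (e e' : E) : Prop :=
  forall Phi : profile E N,
    (forall k, k \in D -> entails (FAnd (B (nab_at Phi k e)) (B e')) (FBot P)) ->
    (forall k, k \notin D -> fequiv (B (nab_at Phi k e)) (B e')) ->
    consistent (bigAnd [seq B (nab_at Phi k e) | k <- enum D]) ->
    entails (FAnd (B (nab Phi e)) (B e')) (FBot P).

Definition decisive_for (N : society lt) (D : {set 'I_(size (agents N))})
  (e e' : E) : Prop :=
  forall Phi : profile E N,
    (forall k, k \in D -> entails (FAnd (B (nab_at Phi k e)) (B e')) (FBot P)) ->
    consistent (bigAnd [seq B (nab_at Phi k e) | k <- enum D]) ->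
    entails (FAnd (B (nab Phi e)) (B e')) (FBot P).

Definition decisive (N : society lt) (D : {set 'I_(size (agents N))}) : Prop :=
  forall e e' : E, @decisive_for N D e e'.
End Postulates.

(* Under (ESF1), (ESF3) and (ESF4) every fusion [nab Phi], read on model sets,
   is a choice function satisfying Arrow's choice axiom.  On two-element
   constraints it thus induces a strict preference (a singleton outcome) or an
   indifference, and these compose transitively through a three-element
   constraint.  (ESF-P) is then the weak Pareto principle and (ESF-I)
   independence of irrelevant alternatives for these pairwise preferences,
   while (ESF-SD) lets an agent hold any needed preference over a triple.
   Arrow's field-expansion argument spreads the local decisiveness of D for
   {w, w'} against w' to decisiveness over every ordered pair of distinct
   interpretations (a third one exists as |P| >= 2).  Finally, if [nab Phi E]
   met E' at u while the members of D share a model v of E outside E', all of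
   them strictly prefer v to u, hence so does [nab Phi]; by (ESF3) this
   excludes u from [nab Phi E]. *)

From Stdlib Require Import Sorted IndefiniteDescription.
From HB Require Import structures.
From mathcomp Require Import all_boot.

Set Implicit Arguments.
Unset Strict Implicit.
Unset Printing Implicit Defensive.

Section Semantics.
Variable P : finType.
Implicit Types (f g : form P) (s : seq (form P)) (u w : interp P).

Lemma models_FBot : models (FBot P) = set0.
Proof. by apply/setP => u; rewrite !inE. Qed.

Lemma consistentE f : consistent f = (models f != set0).
Proof. by rewrite /consistent /entails models_FBot subset0. Qed.

Lemma models_FAnd f g : models (FAnd f g) = models f :&: models g.
Proof. by apply/setP => u; rewrite !inE. Qed.

Lemma entails_botE f g :
  entails (FAnd f g) (FBot P) = (models f :&: models g == set0).
Proof. by rewrite /entails models_FBot subset0 models_FAnd. Qed.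

Lemma entails_bot_set1 f g b :
  models g = [set b] -> entails (FAnd f g) (FBot P) = (b \notin models f).
Proof. by move=> gE; rewrite entails_botE gE setI_eq0 disjoint_sym disjoints1. Qed.

Lemma eval_bigAnd u s : eval u (bigAnd s) = all (eval u) s.
Proof. by elim: s => //= f s ->. Qed.

Lemma consistent_bigAnd (I : Type) (F : I -> form P) (r : seq I) :
  consistent (bigAnd [seq F i | i <- r]) =
  [exists u, all (fun i => u \in models (F i)) r].
Proof.
have inE_bigAnd u : (u \in models (bigAnd [seq F i | i <- r])) =
    all (fun i => u \in models (F i)) r.
  by rewrite inE eval_bigAnd; elim: r => //= i r ->; rewrite inE.
rewrite consistentE; apply/set0Pn/existsP => -[u].
  by rewrite inE_bigAnd; exists u.
by rewrite -inE_bigAnd; exists u.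
Qed.

Definition literal w (p : P) : form P := if w p then FVar p else FNeg (FVar p).

Definition char_form w : form P := bigAnd [seq literal w p | p <- enum P].

Lemma eval_char_form u w : eval u (char_form w) = (u == w).
Proof.
rewrite eval_bigAnd all_map; apply/allP/eqP => [uw|-> p _] /=; last first.
  by rewrite /literal; case: ifP => /= ->.
apply/ffunP => p; have /= := uw p (mem_enum _ p).
by rewrite /literal; case: (w p) => /=; case: (u p).
Qed.

Definition set_form (M : {set interp P}) : form P :=
  foldr (fun w f => FOr (char_form w) f) (FBot P) (enum M).

Lemma models_set_form M : models (set_form M) = M.
Proof.
apply/setP => u; rewrite inE /set_form -mem_enum.
by elim: (enum M) => //= w s ->; rewrite eval_char_form inE.
Qed.

Lemma epistemic_space_onto (E : Type) (B : E -> form P) (M : {set interp P}) :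
  epistemic_space B -> M != set0 -> exists e, models (B e) = M.
Proof.
case=> _ _ Bonto M0; have [|e eE] := Bonto (set_form M).
  by rewrite consistentE models_set_form.
by exists e; rewrite eE models_set_form.
Qed.

Lemma exists_interp_neq2 a b : 1 < #|P| -> exists c : interp P, c != a /\ c != b.
Proof.
move=> P2; have /subsetPn [c _] : ~~ ([set: interp P] \subset [set a; b]).
  apply/negP => /subset_leq_card; apply/negP.
  rewrite -ltnNge cardsT card_ffun card_bool cards2.
  by apply: (leq_trans _ (leq_pexp2l _ P2)); case: (a != b).
by rewrite !inE negb_or => /andP[]; exists c.
Qed.

End Semantics.

Section TwoElementSets.
Variable T : finType.
Implicit Types (X : {set T}) (a b : T).

Lemma subset_set2_notin X a b : X \subset [set a; b] -> b \notin X -> X \subset [set a].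
Proof.
move=> sXab bX; apply/subsetP => x xX; move: (subsetP sXab x xX).
by rewrite !inE => /orP[] // /eqP xb; move: bX; rewrite -xb xX.
Qed.

Lemma subset_set2_notin_eq X a b :
  X \subset [set a; b] -> X != set0 -> b \notin X -> X = [set a].
Proof.
move=> sXab X0 /(subset_set2_notin sXab).
by rewrite subset1 (negbTE X0) orbF => /eqP.
Qed.

Lemma subset_set2_cases X a b : X \subset [set a; b] -> X != set0 ->
  [\/ X = [set a], X = [set b] | X = [set a; b]].
Proof.
move=> sXab X0; have [bX|bX] := boolP (b \in X); last first.
  by apply: Or31; apply: subset_set2_notin_eq bX.
have [aX|aX] := boolP (a \in X); last first.
  by apply: Or32; apply: subset_set2_notin_eq aX; rewrite 1?setUC.
by apply: Or33; apply/eqP; rewrite eqEsubset sXab subUset !sub1set aX bX.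
Qed.

End TwoElementSets.

Section Fusion.
Variables (P : finType) (E : Type) (B : E -> form P).
Hypothesis B_consistent : forall e, consistent (B e).
Hypothesis B_onto : forall M : {set interp P}, M != set0 -> exists e, models (B e) = M.
Implicit Types (a b c u v : interp P) (f g : E -> E).

Local Notation Mo e := (models (B e)).

Lemma models_neq0 e : Mo e != set0.
Proof. by rewrite -consistentE. Qed.

Lemma exists_state1 a : exists e, Mo e = [set a].
Proof. by apply: B_onto; apply/set0Pn; exists a; rewrite set11. Qed.

Lemma exists_state2 a b : exists e, Mo e = [set a; b].
Proof. by apply: B_onto; apply/set0Pn; exists a; rewrite set21. Qed.

Lemma exists_state3 a b c : exists e, Mo e = [set a; b; c].
Proof. by apply: B_onto; apply/set0Pn; exists a; rewrite !inE eqxx. Qed.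

(* (ESF1), (ESF3) and (ESF4) for a fixed profile, read on model sets: the
   choice function [Mo e |-> Mo (f e)] satisfies Arrow's choice axiom. *)
Definition arrow_choice f : Prop :=
  [/\ forall e, Mo (f e) \subset Mo e,
      forall e e', Mo e \subset Mo e' -> Mo (f e') :&: Mo e \subset Mo (f e) &
      forall e e', Mo e \subset Mo e' -> Mo (f e') :&: Mo e != set0 ->
        Mo (f e) \subset Mo (f e') :&: Mo e].

Definition outcome_on f a b (X : {set interp P}) : Prop :=
  forall e, Mo e = [set a; b] -> Mo (f e) = X.

Definition prefers f a b := outcome_on f a b [set a].

Definition indifferent f a b := outcome_on f a b [set a; b].

Definition weakly_prefers f a b : Prop :=
  forall e, Mo e = [set a; b] -> a \in Mo (f e).

Definition agree f g a b : Prop :=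
  forall e, Mo e = [set a; b] -> Mo (f e) = Mo (g e).

Lemma prefers_weakly f a b : prefers f a b -> weakly_prefers f a b.
Proof. by move=> pab e /pab ->; rewrite set11. Qed.

Lemma indifferent_weakly f a b : indifferent f a b -> weakly_prefers f a b.
Proof. by move=> iab e /iab ->; rewrite set21. Qed.

Lemma outcome_onC f a b X : outcome_on f a b X -> outcome_on f b a X.
Proof. by move=> oab e eE; apply: oab; rewrite eE setUC. Qed.

Lemma outcome_on_uniq f a b X Y : outcome_on f a b X -> outcome_on f a b Y -> X = Y.
Proof. by move=> oX oY; have [e eE] := exists_state2 a b; rewrite -(oX e) ?(oY e). Qed.

Lemma outcome_on_agree f g a b X :
  outcome_on f a b X -> outcome_on g a b X -> agree f g a b.
Proof. by move=> ofX ogX e eE; rewrite ofX ?ogX. Qed.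

Section Operator.
Variable f : E -> E.
Hypothesis f_choice : arrow_choice f.

Lemma choice_sub e : Mo (f e) \subset Mo e.
Proof. by case: f_choice. Qed.

Lemma choice_restrict e e' : Mo e \subset Mo e' -> Mo (f e') :&: Mo e != set0 ->
  Mo (f e) = Mo (f e') :&: Mo e.
Proof.
case: f_choice => _ ESF3 ESF4 see' meet.
by apply/eqP; rewrite eqEsubset ESF3 ?ESF4.
Qed.

Lemma choice_models e e' : Mo e = Mo e' -> Mo (f e) = Mo (f e').
Proof.
move=> ee'; have fe' : Mo (f e') :&: Mo e = Mo (f e').
  by rewrite ee'; apply/setIidPl/choice_sub.
by rewrite (@choice_restrict e e') ?fe' ?models_neq0 // ee'.
Qed.

Lemma choice_set1 e a : Mo e = [set a] -> Mo (f e) = [set a].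
Proof.
move=> eE; have := choice_sub e.
by rewrite eE subset1 (negbTE (models_neq0 _)) orbF => /eqP.
Qed.

Lemma outcome_on_state e a b X :
  Mo e = [set a; b] -> Mo (f e) = X -> outcome_on f a b X.
Proof. by move=> eE <- e' e'E; apply: choice_models; rewrite eE e'E. Qed.

Lemma outcome_on_cases a b :
  [\/ prefers f a b, prefers f b a | indifferent f a b].
Proof.
have [e eE] := exists_state2 a b; have oe := outcome_on_state eE.
have := choice_sub e; rewrite eE => /subset_set2_cases/(_ (models_neq0 _)).
case=> /oe; [exact: Or31 | by move/outcome_onC; apply: Or32 | exact: Or33].
Qed.

Lemma outcome_on_trace eT a b u : a \in Mo eT -> b \in Mo eT ->
  u \in Mo (f eT) -> u \in [set a; b] -> outcome_on f a b (Mo (f eT) :&: [set a; b]).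
Proof.
move=> aT bT uF uab e eE; rewrite (@choice_restrict e eT) eE //.
- by rewrite subUset !sub1set aT.
- by apply/set0Pn; exists u; rewrite inE uF.
Qed.

Lemma prefers_notin_trace eT a b : a != b -> prefers f a b ->
  a \in Mo eT -> b \in Mo eT -> b \notin Mo (f eT).
Proof.
move=> ab pab aT bT; apply/negP => bF.
have := outcome_on_uniq pab (outcome_on_trace aT bT bF (set22 a b)).
by move/setP => /(_ b); rewrite in_setI bF set22 in_set1 eq_sym (negbTE ab).
Qed.

Lemma prefers_of_trace eT a b : a \in Mo eT -> b \in Mo eT ->
  a \in Mo (f eT) -> b \notin Mo (f eT) -> prefers f a b.
Proof.
move=> aT bT aF bF e eE; rewrite (outcome_on_trace aT bT aF (set21 a b) eE).
apply/setP => x; rewrite in_setI in_set2 in_set1.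
by case: eqP => [->|_]; rewrite ?aF //; case: eqP => [->|]; rewrite ?(negbTE bF) ?andbF.
Qed.

Lemma prefers_weakly_trans a b c : a != b ->
  prefers f a b -> weakly_prefers f b c -> prefers f a c.
Proof.
move=> ab pab wbc; have [eT eTE] := exists_state3 a b c.
have [aT bT cT] : [/\ a \in Mo eT, b \in Mo eT & c \in Mo eT].
  by rewrite eTE !inE !eqxx !orbT.
have bF := prefers_notin_trace ab pab aT bT.
have cF : c \notin Mo (f eT).
  apply/negP => cF; have [e eE] := exists_state2 b c.
  have := wbc e eE; rewrite (outcome_on_trace bT cT cF (set22 b c) eE).
  by rewrite in_setI (negbTE bF).
apply: (prefers_of_trace aT cT _ cF).
have [u uF] := set0Pn _ (models_neq0 (f eT)); have := subsetP (choice_sub eT) u uF.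
rewrite eTE !in_setU !in_set1 => /orP[/orP[]|] /eqP eu; move: uF; rewrite eu //.
  by rewrite (negbTE bF).
by rewrite (negbTE cF).
Qed.

Lemma weakly_prefers_trans a b c : b != c ->
  weakly_prefers f a b -> prefers f b c -> prefers f a c.
Proof.
move=> bc wab pbc; have [eT eTE] := exists_state3 a b c.
have [aT bT cT] : [/\ a \in Mo eT, b \in Mo eT & c \in Mo eT].
  by rewrite eTE !inE !eqxx !orbT.
have cF := prefers_notin_trace bc pbc bT cT.
apply: (prefers_of_trace aT cT _ cF).
have [u uF] := set0Pn _ (models_neq0 (f eT)); have := subsetP (choice_sub eT) u uF.
rewrite eTE !in_setU !in_set1 => /orP[/orP[]|] /eqP eu; move: uF; rewrite eu //.
  move=> bF; have [e eE] := exists_state2 a b.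
  by have := wab e eE; rewrite (outcome_on_trace aT bT bF (set22 a b) eE) in_setI => /andP[].
by rewrite (negbTE cF).
Qed.

End Operator.

Variables (S : Type) (lt : S -> S -> Prop) (nab : fusion_op lt E).
Hypothesis nab_basic : ES_basic_fusion B nab.
Hypothesis nab_SD : ESF_SD B nab.
Hypothesis nab_P : ESF_P B nab.
Hypothesis nab_I : ESF_I B nab.

Lemma arrow_choice_nab (N : society lt) (Phi : profile E N) : arrow_choice (nab Phi).
Proof.
have meetE e e' : Mo e \subset Mo e' -> fequiv (B e) (FAnd (B e') (B e)).
  by move=> see'; rewrite /fequiv models_FAnd; apply/esym/setIidPr.
case: nab_basic => ESF1 _ ESF3 ESF4; split => [e|e e' see'|e e' see' meet].
- exact: ESF1.
- by rewrite -models_FAnd; apply: ESF3; apply: meetE.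
- by rewrite -models_FAnd; apply: ESF4 (meetE _ _ see') _; rewrite consistentE models_FAnd.
Qed.

Lemma arrow_choice_nabla1 i Ei : arrow_choice (nabla1 nab i Ei).
Proof. exact: arrow_choice_nab. Qed.

Lemma exists_agent_strict i a b c : a != b -> b != c -> a != c ->
  exists Ei, [/\ prefers (nabla1 nab i Ei) a b, prefers (nabla1 nab i Ei) b c
               & prefers (nabla1 nab i Ei) a c].
Proof.
move=> ab bc ac; have [eab eabE] := exists_state2 a b; have [ebc ebcE] := exists_state2 b c.
have [_ _ _ [Ei [fab fbc]]] := nab_SD i ab bc ac eabE ebcE.
have ch := arrow_choice_nabla1 i Ei.
have pab := outcome_on_state ch eabE fab; have pbc := outcome_on_state ch ebcE fbc.
by exists Ei; split => //; exact: (prefers_weakly_trans ch ab pab (prefers_weakly pbc)).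
Qed.

Lemma exists_agent_strict_indifferent i a b c : a != b -> b != c -> a != c ->
  exists Ei, [/\ prefers (nabla1 nab i Ei) a b, indifferent (nabla1 nab i Ei) b c
               & prefers (nabla1 nab i Ei) a c].
Proof.
move=> ab bc ac; have [eab eabE] := exists_state2 a b; have [ebc ebcE] := exists_state2 b c.
have [_ _ [Ei [fab fbc]] _] := nab_SD i ab bc ac eabE ebcE.
have ch := arrow_choice_nabla1 i Ei.
have pab := outcome_on_state ch eabE fab; have ibc := outcome_on_state ch ebcE fbc.
by exists Ei; split => //; exact: (prefers_weakly_trans ch ab pab (indifferent_weakly ibc)).
Qed.

Lemma exists_agent_indifferent_strict i a b c : a != b -> b != c -> a != c ->
  exists Ei, [/\ indifferent (nabla1 nab i Ei) a b, prefers (nabla1 nab i Ei) b c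
               & prefers (nabla1 nab i Ei) a c].
Proof.
move=> ab bc ac; have [eab eabE] := exists_state2 a b; have [ebc ebcE] := exists_state2 b c.
have [_ [Ei [fab fbc]] _ _] := nab_SD i ab bc ac eabE ebcE.
have ch := arrow_choice_nabla1 i Ei.
have iab := outcome_on_state ch eabE fab; have pbc := outcome_on_state ch ebcE fbc.
by exists Ei; split => //; exact: (weakly_prefers_trans ch bc (indifferent_weakly iab) pbc).
Qed.

Lemma exists_agent_right i g (inD : bool) x y z : arrow_choice g ->
  x != y -> z != x -> z != y -> (inD -> prefers g x z) ->
  exists Ei, [/\ prefers (nabla1 nab i Ei) (if inD then x else y) (if inD then y else x),
               prefers (nabla1 nab i Ei) y z & agree (nabla1 nab i Ei) g x z].
Proof.
move=> gch xy zx zy gxz; have yx : y != x by rewrite eq_sym.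
have xz : x != z by rewrite eq_sym.
have yz : y != z by rewrite eq_sym.
case: inD gxz => [/(_ isT) gxz|_].
  have [Ei [pxy pyz pxz]] := exists_agent_strict i xy yz xz.
  by exists Ei; split => //; exact: outcome_on_agree pxz gxz.
case: (outcome_on_cases gch x z) => [gxz|gzx|gxz].
- have [Ei [pyx pxz pyz]] := exists_agent_strict i yx xz yz.
  by exists Ei; split => //; exact: outcome_on_agree pxz gxz.
- have [Ei [pyz pzx pyx]] := exists_agent_strict i yz zx yx.
  by exists Ei; split => //; exact: outcome_on_agree (outcome_onC pzx) (outcome_onC gzx).
- have [Ei [pyx ixz pyz]] := exists_agent_strict_indifferent i yx xz yz.
  by exists Ei; split => //; exact: outcome_on_agree ixz gxz.
Qed.

Lemma exists_agent_left i g (inD : bool) x y z : arrow_choice g ->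
  x != y -> z != x -> z != y -> (inD -> prefers g z y) ->
  exists Ei, [/\ prefers (nabla1 nab i Ei) (if inD then x else y) (if inD then y else x),
               prefers (nabla1 nab i Ei) z x & agree (nabla1 nab i Ei) g z y].
Proof.
move=> gch xy zx zy gzy; have yx : y != x by rewrite eq_sym.
have yz : y != z by rewrite eq_sym.
case: inD gzy => [/(_ isT) gzy|_].
  have [Ei [pzx pxy pzy]] := exists_agent_strict i zx xy zy.
  by exists Ei; split => //; exact: outcome_on_agree pzy gzy.
case: (outcome_on_cases gch z y) => [gzy|gyz|gzy].
- have [Ei [pzy pyx pzx]] := exists_agent_strict i zy yx zx.
  by exists Ei; split => //; exact: outcome_on_agree pzy gzy.
- have [Ei [pyz pzx pyx]] := exists_agent_strict i yz zx yx.
  by exists Ei; split => //; exact: outcome_on_agree (outcome_onC pyz) (outcome_onC gyz).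
- have [Ei [izy pyx pzx]] := exists_agent_indifferent_strict i zy yx zx.
  by exists Ei; split => //; exact: outcome_on_agree izy gzy.
Qed.

Section Society.
Variable N : society lt.
Implicit Types Phi : profile E N.

Local Notation agent Phi k := (nab_at nab Phi k).

Lemma arrow_choice_agent Phi k : arrow_choice (agent Phi k).
Proof. exact: arrow_choice_nab. Qed.

Lemma pareto Phi a b : a != b ->
  (forall k, prefers (agent Phi k) a b) -> prefers (nab Phi) a b.
Proof.
move=> ab pab; have [e eE] := exists_state2 a b; have [e' e'E] := exists_state1 b.
apply: (outcome_on_state (arrow_choice_nab Phi) eE).
apply: (subset_set2_notin_eq (b := b) _ (models_neq0 _)).
  by rewrite -eE; exact: choice_sub (arrow_choice_nab Phi) e.
rewrite -(entails_bot_set1 _ e'E); apply: nab_P => [|k].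
  rewrite consistent_bigAnd; apply/existsP; exists a; apply/allP => k _.
  by rewrite (pab k e eE) set11.
by rewrite (entails_bot_set1 _ e'E) (pab k e eE) in_set1 eq_sym.
Qed.

Lemma iia Phi Phi' a b : (forall k, agree (agent Phi k) (agent Phi' k) a b) ->
  prefers (nab Phi) a b -> prefers (nab Phi') a b.
Proof.
move=> agents pab e eE; rewrite -(pab e eE); apply/esym/nab_I => e' e'e k.
have := e'e; rewrite /entails eE => /subset_set2_cases/(_ (models_neq0 _)) [] e'E;
  rewrite /fequiv ?(choice_set1 (arrow_choice_agent _ _) e'E) //; exact: agents.
Qed.

Variable D : {set 'I_(size (agents N))}.

Definition decisive_over a b : Prop := forall Phi,
  (forall k, k \in D -> prefers (agent Phi k) a b) -> prefers (nab Phi) a b.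

Definition almost_decisive_over a b : Prop := forall Phi,
  (forall k, k \in D -> prefers (agent Phi k) a b) ->
  (forall k, k \notin D -> prefers (agent Phi k) b a) -> prefers (nab Phi) a b.

Lemma decisive_over_almost a b : decisive_over a b -> almost_decisive_over a b.
Proof. by move=> dab Phi /dab. Qed.

Lemma almost_decisive_of_locally w w' eww ew :
  Mo eww = [set w; w'] -> Mo ew = [set w'] -> w != w' ->
  locally_decisive B nab D eww ew -> almost_decisive_over w w'.
Proof.
move=> ewwE ewE ww' ld Phi pD pO.
apply: (outcome_on_state (arrow_choice_nab Phi) ewwE).
apply: (subset_set2_notin_eq (b := w') _ (models_neq0 _)).
  by rewrite -ewwE; exact: choice_sub (arrow_choice_nab Phi) eww.
rewrite -(entails_bot_set1 _ ewE); apply: ld => [k kD|k kD|].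
- by rewrite (entails_bot_set1 _ ewE) (pD k kD _ ewwE) in_set1 eq_sym.
- by rewrite /fequiv ewE; apply: pO; rewrite // ewwE setUC.
rewrite consistent_bigAnd; apply/existsP; exists w; apply/allP => k.
by rewrite mem_enum => kD; rewrite (pD k kD _ ewwE) set11.
Qed.

Lemma almost_decisive_expand_right x y z : x != y -> z != x -> z != y ->
  almost_decisive_over x y -> decisive_over x z.
Proof.
move=> xy zx zy axy Phi pD.
have [Phi' Phi'E] := functional_choice _ (fun k =>
  exists_agent_right (agent_at k) (arrow_choice_agent Phi k) xy zx zy (pD k)).
apply: (iia (Phi := Phi')) => [k|]; first by case: (Phi'E k).
apply: (prefers_weakly_trans (arrow_choice_nab Phi') xy).
  by apply: axy => k kD; case: (Phi'E k); rewrite ?kD ?(negbTE kD).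
apply/prefers_weakly/pareto; first by rewrite eq_sym.
by move=> k; case: (Phi'E k).
Qed.

Lemma almost_decisive_expand_left x y z : x != y -> z != x -> z != y ->
  almost_decisive_over x y -> decisive_over z y.
Proof.
move=> xy zx zy axy Phi pD.
have [Phi' Phi'E] := functional_choice _ (fun k =>
  exists_agent_left (agent_at k) (arrow_choice_agent Phi k) xy zx zy (pD k)).
apply: (iia (Phi := Phi')) => [k|]; first by case: (Phi'E k).
apply: (prefers_weakly_trans (arrow_choice_nab Phi') zx).
  by apply: pareto => // k; case: (Phi'E k).
by apply/prefers_weakly; apply: axy => k kD; case: (Phi'E k); rewrite ?kD ?(negbTE kD).
Qed.

Lemma decisive_over_all w w' : 1 < #|P| -> w != w' -> almost_decisive_over w w' ->
  forall a b, a != b -> decisive_over a b.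
Proof.
move=> P2 ww' aww'; have dw u : u != w -> decisive_over w u.
  move=> uw; have [->|uw'] := eqVneq u w'.
    have [z [zw zw']] := exists_interp_neq2 w w' P2.
    have dwz := almost_decisive_expand_right ww' zw zw' aww'.
    by apply: (almost_decisive_expand_right _ _ _ (decisive_over_almost dwz)); rewrite // eq_sym.
  exact: almost_decisive_expand_right uw uw' aww'.
move=> a b ab; have [aw|aw] := eqVneq a w.
  by subst a; rewrite eq_sym in ab; apply: dw.
have [bw|bw] := eqVneq b w; last first.
  by apply: (almost_decisive_expand_left _ aw ab (decisive_over_almost (dw b bw))); rewrite eq_sym.
subst b; have [z [za zw]] := exists_interp_neq2 a w P2.
have az : a != z by rewrite eq_sym.
have daz := almost_decisive_expand_left _ aw az (decisive_over_almost (dw z zw)).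
by apply: (almost_decisive_expand_right az _ _ (decisive_over_almost (daz _))); rewrite eq_sym.
Qed.

Lemma decisive_over_coalition_neq0 a b : a != b ->
  decisive_over a b -> decisive_over b a -> D != set0.
Proof.
move=> ab dab dba; apply/negP => /eqP D0; have [e _] := exists_state1 a.
pose Phi : profile E N := fun _ => e.
have [pab pba] : prefers (nab Phi) a b /\ prefers (nab Phi) b a.
  by split; [apply: dab | apply: dba] => k; rewrite D0 inE.
have := outcome_on_uniq pab (outcome_onC pba).
by move/set1_inj/eqP; rewrite (negbTE ab).
Qed.

Lemma decisive_of_decisive_over : D != set0 ->
  (forall a b, a != b -> decisive_over a b) -> decisive B nab D.
Proof.
move=> /set0Pn[k0 k0D] dec e e' Phi pD.
rewrite consistent_bigAnd => /existsP[v /allP vD].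
have {}vD k : k \in D -> v \in Mo (agent Phi k e) by move=> kD; apply: vD; rewrite mem_enum.
rewrite entails_botE; apply/negPn/negP => /set0Pn[u /setIP[uF ue']].
have uD k : k \in D -> u \notin Mo (agent Phi k e).
  move=> kD; have := pD k kD; rewrite entails_botE => /eqP/setP/(_ u).
  by rewrite in_setI ue' andbT in_set0 => ->.
have vu : v != u by apply: contraNneq (uD k0 k0D) => <-; apply: vD.
have ve := subsetP (choice_sub (arrow_choice_agent Phi k0) e) v (vD k0 k0D).
have ue := subsetP (choice_sub (arrow_choice_nab Phi) e) u uF.
have pvu : prefers (nab Phi) v u.
  apply: (dec v u vu Phi) => k kD.
  exact: (prefers_of_trace (arrow_choice_agent Phi k) ve ue (vD k kD) (uD k kD)).
by move: (prefers_notin_trace (arrow_choice_nab Phi) vu pvu ve ue); rewrite uF.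
Qed.

Lemma decisive_of_locally_decisive w w' eww ew : 1 < #|P| ->
  Mo eww = [set w; w'] -> Mo ew = [set w'] -> w != w' ->
  locally_decisive B nab D eww ew -> decisive B nab D.
Proof.
move=> P2 ewwE ewE ww' ld.
have dec := decisive_over_all P2 ww' (almost_decisive_of_locally ewwE ewE ww' ld).
have w'w : w' != w by rewrite eq_sym.
apply: decisive_of_decisive_over (dec).
exact: decisive_over_coalition_neq0 ww' (dec w w' ww') (dec w' w w'w).
Qed.

End Society.
End Fusion.

Theorem theorem5
  (P : finType) (E : Type) (B : E -> form P)
  (S : Type) (lt : S -> S -> Prop) (nab : fusion_op lt E)
  (N : society lt) (D : {set 'I_(size (agents N))}) :
  1 < #|P| ->
  epistemic_space B ->
  well_order lt ->
  ES_basic_fusion B nab ->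
  ESF_SD B nab ->
  ESF_P B nab ->
  ESF_I B nab ->
  (exists (w w' : interp P) (Eww' Ew' : E),
     [/\ w != w',
         models (B Eww') = [set w; w'],
         models (B Ew') = [set w'] &
         @locally_decisive P E B S lt nab N D Eww' Ew']) ->
  @decisive P E B S lt nab N D.
Proof.
move=> P2 ES _ basic SD ParP IndI [w [w' [Eww' [Ew' [ww' ewwE ewE ld]]]]].
have [_ B_consistent _] := ES.
have B_onto M : M != set0 -> exists e, models (B e) = M := epistemic_space_onto ES.
exact: (decisive_of_locally_decisive B_consistent B_onto basic SD ParP IndI P2 ewwE ewE ww' ld).
Qed.
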